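(* Let $m\geq 0$, $n\geq 1$, and let $\lambda$ be a partition of $n$ with $m$-Durfee rectangle symbol $(\alpha,\beta)_{(m+j)\times j}$. Then $\operatorname{rank}(\lambda)\geq -m+1$ if and only if either $j=0$, or $j\geq 1$ and $\ell(\beta)+1\leq \ell(\alpha)$.
   Context: For a partition $\lambda=(\lambda_1\geq\lambda_2\geq\cdots)$, $\ell(\lambda)$ is its number of parts and $\operatorname{rank}(\lambda)=\lambda_1-\ell(\lambda)$. The $m$-Durfee rectangle symbol of $\lambda$ is defined as follows. - If $\ell(\lambda)>m$, let $j\geq1$ be the largest integer with $\lambda_{m+j}\geq j$; this gives the $(m+j)\times j$ rectangle (with $m+j$ rows and $j$ columns) in the Ferrers diagram. Then $\alpha=(\alpha_1,\ldots,\alpha_s)$ is the partition formed by the columns to the right of the rectangle within the first $m+j$ rows: $\alpha_i$ is the number of $k\leq m+j$ with $\lambda_k\geq j+i$. Also $\beta=(\beta_1,\ldots,\beta_t)=(\lambda_{m+j+1},\lambda_{m+j+2},\ldots)$ consists of the rows below the rectangle. Thus $m+j\geq\alpha_1\geq\cdots\geq\alpha_s$, $j\geq\beta_1\geq\cdots\geq\beta_t$, and $n=j(m+j)+\sum\alpha_i+\sum\beta_i$. - If $\ell(\lambda)\leq m$, one sets $j=0$, $\alpha=\lambda'$ (the conjugate of $\lambda$) and $\beta=\emptyset$. The symbol is written $(\alpha,\beta)_{(m+j)\times j}$, and $\ell(\alpha),\ell(\beta)$ denote the numbers of parts of $\alpha$ and $\beta$. *)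

From mathcomp Require Import all_boot all_order all_algebra.
Set Implicit Arguments. Unset Strict Implicit. Unset Printing Implicit Defensive.

Definition is_partition (n : nat) (lam : seq nat) : Prop :=
  [/\ sorted geq lam, all (fun x => 0 < x) lam & sumn lam = n].

(* lambda_i, 1-indexed (0 beyond the length) *)
Definition part (lam : seq nat) (i : nat) : nat := nth 0 lam i.-1.

Definition plen (lam : seq nat) : nat := size lam.

Definition prank (lam : seq nat) : int := (part lam 1)%:Z - (plen lam)%:Z.

Definition conj_part (lam : seq nat) : seq nat :=
  [seq count (fun x => i <= x) lam | i <- iota 1 (part lam 1)].

(* j of the m-Durfee rectangle: largest j >= 1 with lambda_{m+j} >= j
   when ell(lambda) > m; 0 otherwise. (Any such j satisfies j <= ell.) *)
Definition durfee_j (m : nat) (lam : seq nat) : nat :=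
  if m < plen lam then
    \max_(j < (plen lam).+1 | (0 < j) && (j <= part lam (m + j))) j
  else 0.

(* alpha: alpha_i = #{k <= m+j : lambda_k >= j+i}, for the columns to the
   right of the rectangle, i = 1 .. lambda_1 - j; alpha = conjugate when j = 0. *)
Definition durfee_alpha (m : nat) (lam : seq nat) : seq nat :=
  if m < plen lam then
    let j := durfee_j m lam in
    [seq count (fun x => j + i <= x) (take (m + j) lam) | i <- iota 1 (part lam 1 - j)]
  else conj_part lam.

(* beta: the rows below the rectangle; empty when j = 0 *)
Definition durfee_beta (m : nat) (lam : seq nat) : seq nat :=
  if m < plen lam then drop (m + durfee_j m lam) lam else [::].

From mathcomp Require Import all_boot all_order all_algebra.
From mathcomp Require Import zify.
Import Order.TTheory GRing.Theory Num.Theory.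

Set Implicit Arguments.
Unset Strict Implicit.
Unset Printing Implicit Defensive.

(* When [m < ell(lambda)], the rectangle has width [j >= 1] and fits inside
   [lambda]: [m + j <= ell(lambda)] and [j <= lambda_(m+j) <= lambda_1].  Hence
   [ell(beta) = ell(lambda) - m - j] and [ell(alpha) = lambda_1 - j] with no
   truncation, and [ell(beta) + 1 <= ell(alpha)] is just
   [ell(lambda) - m + 1 <= lambda_1], i.e. [rank(lambda) >= 1 - m].
   When [ell(lambda) <= m], [j = 0] and the rank bound holds since [lambda_1 >= 1]. *)

Lemma part_le_head (lam : seq nat) (k : nat) :
  sorted geq lam -> part lam k <= part lam 1.
Proof.
rewrite /part => lam_sorted.
have [k_lt|k_ge] := ltnP k.-1 (size lam); last by rewrite nth_default.
apply: (sorted_leq_nth (rev_trans leq_trans) leqnn) => //.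
by rewrite inE (leq_ltn_trans _ k_lt).
Qed.

Lemma part_head_gt0 (n : nat) (lam : seq nat) :
  0 < n -> is_partition n lam -> 0 < part lam 1.
Proof.
case: lam => [|x lam] n_gt0 [_ lam_pos lam_sum]; first by rewrite -lam_sum in n_gt0.
by case/andP: lam_pos.
Qed.

Lemma durfee_j_eq0 (m : nat) (lam : seq nat) :
  plen lam <= m -> durfee_j m lam = 0.
Proof. by rewrite /durfee_j leqNgt => /negbTE ->. Qed.

Section DurfeeRectangle.

Variables (m : nat) (lam : seq nat).
Hypotheses (m_lt_len : m < plen lam) (lam_pos : all (fun x => 0 < x) lam).

Lemma durfee_j_gt0_le_part :
  0 < durfee_j m lam <= part lam (m + durfee_j m lam).
Proof.
rewrite /durfee_j m_lt_len.
set P := fun j : 'I_(plen lam).+1 => (0 < j) && (j <= part lam (m + j)).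
have one_lt : 1 < (plen lam).+1 by rewrite ltnS (leq_ltn_trans _ m_lt_len).
have P_one : P (Ordinal one_lt).
  by rewrite /P /= /part addn1 (allP lam_pos) // mem_nth.
have P_nonempty : 0 < #|P| by apply/card_gt0P; exists (Ordinal one_lt).
by have [j P_j ->] := eq_bigmax_cond val P_nonempty.
Qed.

Lemma addn_durfee_j_le_len : m + durfee_j m lam <= plen lam.
Proof.
case/andP: durfee_j_gt0_le_part => j_gt0 j_le_part; rewrite /plen.
have [//|len_lt] := leqP (m + durfee_j m lam) (size lam).
by move: j_le_part; rewrite /part nth_default; lia.
Qed.

Lemma size_durfee_beta :
  size (durfee_beta m lam) = plen lam - (m + durfee_j m lam).
Proof. by rewrite /durfee_beta m_lt_len size_drop. Qed.

Lemma size_durfee_alpha :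
  size (durfee_alpha m lam) = part lam 1 - durfee_j m lam.
Proof. by rewrite /durfee_alpha m_lt_len size_map size_iota. Qed.

End DurfeeRectangle.

Theorem proposition2p3 (m n : nat) (lam : seq nat) :
  1 <= n -> is_partition n lam ->
  ((1 - (m%:Z) <= prank lam)%R <->
   (durfee_j m lam = 0 \/
    (1 <= durfee_j m lam /\ size (durfee_beta m lam) + 1 <= size (durfee_alpha m lam)))).
Proof.
move=> n_gt0 lam_part; have [lam_sorted lam_pos _] := lam_part.
have head_gt0 := part_head_gt0 n_gt0 lam_part.
rewrite /prank; have [len_le_m|m_lt_len] := leqP (plen lam) m.
  by rewrite durfee_j_eq0 //; split => _; [left | lia].
have /andP[j_gt0 j_le_part] := durfee_j_gt0_le_part m_lt_len lam_pos.
have j_le_head := leq_trans j_le_part (part_le_head _ lam_sorted).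
have fits := addn_durfee_j_le_len m_lt_len lam_pos.
rewrite size_durfee_beta // size_durfee_alpha //.
by split=> [rank_ge|[j_eq0|[_ sizes]]]; [right; split=> //|..]; lia.
Qed.
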